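(* Let $G$ be a connected directed multigraph on the vertex set $[n+1]$ with $m$ edges, each directed $i\to j$ with $i<j$, with at least one incoming edge at vertex $i$ for $i=2,\ldots,n+1$, and let ${\bf b}=(\sum_{i=1}^n b_i,-b_1,\ldots,-b_n)$ with $b_i\in\mathbb{Z}_{\ge0}$. Then \[ K_G({\bf b})=\sum_{{\bf j}}\binom{b_1+{\rm in}_2}{j_1}\cdots\binom{b_n+{\rm in}_{n+1}}{j_n}\cdot K_G(0,{\rm in}_2-j_1,{\rm in}_3-j_2,\ldots,{\rm in}_{n+1}-j_n), \] where ${\rm in}_i={\rm ind}_i-1$, ${\rm ind}_i$ is the indegree of vertex $i$, and the sum is over weak compositions ${\bf j}=(j_1,\ldots,j_n)$ of $m-n$ that are $\le({\rm in}_2,\ldots,{\rm in}_{n+1})$ in dominance order.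
   Context: $K_G({\bf v})$ (Kostant partition function), for ${\bf v}\in\mathbb{Z}^{n+1}$, is the number of $f\in\mathbb{Z}_{\ge0}^{E(G)}$ with outflow minus inflow at each vertex $k$ equal to $v_k$. For weak compositions ${\bf j},{\bf k}$ of the same integer, ${\bf j}\le{\bf k}$ in dominance order means $j_1+\cdots+j_l\le k_1+\cdots+k_l$ for all $l$. *)

From mathcomp Require Import all_boot all_order all_algebra.
Set Implicit Arguments. Unset Strict Implicit. Unset Printing Implicit Defensive.
Import Order.TTheory GRing.Theory Num.Theory.

(* Vertices [n+1] = {1,...,n+1} are represented by 'I_(n.+1), vertex k+1 of
   the paper being the ordinal k. *)

Definition netflow (n m : nat) (E : 'I_m -> 'I_n.+1 * 'I_n.+1)
  (f : 'I_m -> nat) (k : 'I_n.+1) : int :=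
  (\sum_(e < m | (E e).1 == k) f e)%:Z - (\sum_(e < m | (E e).2 == k) f e)%:Z.

Definition indeg (n m : nat) (E : 'I_m -> 'I_n.+1 * 'I_n.+1) (k : 'I_n.+1) : nat :=
  #|[set e : 'I_m | (E e).2 == k]|.

(* Since every edge e goes i -> j with i < j, the flow on each
   edge is bounded by the net flow across a cut {1..k}, hence by
   B = sum_k |v_k|; we therefore count the (finitely many) flows with values
   in {0..B}, which are all the flows. *)
Definition KPF (n m : nat) (E : 'I_m -> 'I_n.+1 * 'I_n.+1)
  (v : 'I_n.+1 -> int) : nat :=
  let B := (\sum_(k < n.+1) `|v k|)%N in
  #|[set f : {ffun 'I_m -> 'I_B.+1} |
       [forall k : 'I_n.+1, netflow E (fun e => nat_of_ord (f e)) k == v k]]|.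

Definition ug_connected (n m : nat) (E : 'I_m -> 'I_n.+1 * 'I_n.+1) : Prop :=
  forall x y : 'I_n.+1,
    connect (fun a b => [exists e : 'I_m, (E e == (a, b)) || (E e == (b, a))]) x y.

Definition bvec (n : nat) (b : 'I_n -> nat) (k : 'I_n.+1) : int :=
  if unlift ord0 k is Some i then - (b i)%:Z else (\sum_(i < n) b i)%:Z.

Definition inm (n m : nat) (E : 'I_m -> 'I_n.+1 * 'I_n.+1) (i : 'I_n) : nat :=
  (indeg E (lift ord0 i)).-1.

Definition rhsvec (n m : nat) (E : 'I_m -> 'I_n.+1 * 'I_n.+1) (j : 'I_n -> nat)
  (k : 'I_n.+1) : int :=
  if unlift ord0 k is Some i then (inm E i)%:Z - (j i)%:Z else 0.

Definition dom_le (n : nat) (j k : 'I_n -> nat) : bool :=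
  [forall l : 'I_n.+1, (\sum_(i < n | i < l) j i <= \sum_(i < n | i < l) k i)%N].

(* Number the vertices 0, ..., n, so that vertex k >= 1 has demand -b_k and
   in_k = indeg k - 1.  Induction on p: the flows on the subgraph G_p spanned by the
   vertices < p, with demand (b_1 + ... + b_(p-1), -b_1, ..., -b_(p-1)), are counted by
   the sum, over flows g on the edges of G_p not leaving vertex 0, of
   prod_(0<i<p) C(b_i + in_i, in_i - netflow_g(i)).  Adding vertex p, a flow of G_(p+1)
   is a flow c on the in-edges of p of total b_p plus a flow of G_p whose demands are
   shifted by the outflow of c.  On the other side, the new factor
   C(b_p + in_p, in_p + |y|), with y the flow into p, expands as the sum over the same c
   of prod_e C(c_e, y_e), and the sum over y is then a multivariate Vandermonde
   convolution producing the shifted binomials.  For p = n + 1 and a flow g avoiding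
   vertex 0, the only j whose K_G(0, in - j) counts g is j = in - netflow_g; it is a weak
   composition of m - n dominated by in, because the flow of g out of every set
   {1, ..., l} is nonnegative. *)

From mathcomp Require Import all_boot all_order all_algebra.
From Stdlib Require Import FunctionalExtensionality.
From mathcomp Require Import zify ring.
Set Implicit Arguments. Unset Strict Implicit. Unset Printing Implicit Defensive.
Import Order.TTheory GRing.Theory Num.Theory.

Lemma ord_gt0_neq0 n (i : 'I_n.+1) : 0 < i -> (i == ord0) = false.
Proof. by rewrite lt0n -(inj_eq val_inj) => /negbTE. Qed.

Lemma Posz_sum (I : finType) (P : pred I) (F : I -> nat) :
  Posz (\sum_(i | P i) F i) = (\sum_(i | P i) (F i)%:Z)%R.
Proof. exact: (big_morph Posz PoszD (erefl _)). Qed.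

Lemma sum_ord_trunc (K t : nat) (G : nat -> nat) : t <= K ->
  (forall x, t <= x < K -> G x = 0) -> \sum_(x < K) G x = \sum_(x < t) G x.
Proof.
move=> tK G0; rewrite -!(big_mkord xpredT) (big_cat_nat (leq0n t) tK) /=.
rewrite [X in _ + X = _]big_nat_cond [X in _ + X = _]big1 ?addn0 // => x.
by rewrite andbT => /G0.
Qed.

Lemma sum_restrict (D : finType) (S : {set D}) (P : pred D) (phi : D -> nat) :
  (forall e, e \notin S -> phi e = 0) -> \sum_(e | P e) phi e = \sum_(e in S | P e) phi e.
Proof.
move=> phi0; rewrite (bigID (mem S)) /= [X in _ + X]big1 ?addn0 => [|e /andP[_ /phi0] //].
by apply: eq_bigl => e; rewrite andbC.
Qed.

Lemma sum_vanishing_off (D : finType) (S : {set D}) (phi : D -> nat) :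
  (forall e, e \notin S -> phi e = 0) -> \sum_(e in S) phi e = \sum_e phi e.
Proof. by move=> /(sum_restrict predT) ->; apply: eq_bigl => e; rewrite andbT. Qed.

Lemma big_setD1_if (R : Type) (idx : R) (op : Monoid.com_law idx) (D : finType)
    (A : {set D}) (e0 : D) (x : nat) (h : D -> nat) (G : D -> nat -> R) : e0 \in A ->
  \big[op/idx]_(e in A) G e (if e == e0 then x else h e) =
  op (G e0 x) (\big[op/idx]_(e in A :\ e0) G e (h e)).
Proof.
move=> e0A; rewrite (big_setD1 _ e0A) eqxx; congr (op _ _).
by apply: eq_bigr => e; rewrite in_setD1 => /andP[/negbTE ->].
Qed.

Lemma sum_setD1_cond (D : finType) (S : {set D}) (e0 : D) (P : pred D) (F : D -> nat) :
  e0 \in S ->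
  \sum_(e in S | P e) F e = (if P e0 then F e0 else 0) + \sum_(e in S :\ e0 | P e) F e.
Proof.
move=> e0S; rewrite big_mkcondr (big_setD1 _ e0S) /= [in RHS]big_mkcondr.
by congr (_ + _); apply: eq_bigl => e; rewrite in_setD1 andbC.
Qed.

Lemma big_ord_pos_ltS (R : Type) (idx : R) (op : Monoid.com_law idx) n
    (F : 'I_n.+1 -> R) (P : 'I_n.+1) : 0 < P ->
  \big[op/idx]_(i : 'I_n.+1 | 0 < i < P.+1) F i =
  op (F P) (\big[op/idx]_(i : 'I_n.+1 | 0 < i < P) F i).
Proof.
move=> P_gt0; rewrite (bigD1 P) /= ?P_gt0 ?ltnSn //; congr (op _ _).
by apply: eq_bigl => i; rewrite -(inj_eq val_inj) /=; lia.
Qed.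

Lemma big_ord_pos_lift (R : Type) (idx : R) (op : Monoid.law idx) n (F : 'I_n.+1 -> R) :
  \big[op/idx]_(i : 'I_n.+1 | 0 < i < n.+1) F i = \big[op/idx]_(i < n) F (lift ord0 i).
Proof.
rewrite big_mkcond big_ord_recl /= Monoid.mul1m; apply: eq_bigr => i _.
by rewrite /= /bump /= ltnS ltn_ord.
Qed.

Definition binZ (a : nat) (l : int) : nat := if l is Posz k then 'C(a, k) else 0.

Lemma binZ_neg a (l : int) : (l < 0)%R -> binZ a l = 0.
Proof. by case: l. Qed.

Lemma binZ_subn a (l x : nat) :
  binZ a (l%:Z - x%:Z)%R = if x <= l then 'C(a, l - x) else 0.
Proof.
case: leqP => [xl | lx]; first by rewrite subzn.
by rewrite binZ_neg // subr_lt0 ltz_nat.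
Qed.

Lemma hockey_stick M a : \sum_(x < M.+1) 'C(x, a) = 'C(M.+1, a.+1).
Proof. by elim: M => [|M IH]; rewrite big_ord_recr /= ?IH ?big_ord0 //; case: a. Qed.

Lemma sum_bin_mul_bin_sub M a b :
  \sum_(x < M.+1) 'C(x, a) * 'C(M - x, b) = 'C(M.+1, (a + b).+1).
Proof.
elim: M b => [|M IH] [|b].
- by rewrite big_ord1 !bin0 muln1; case: a.
- by rewrite big_ord1 bin0n muln0 addnS; case: a.
- by under eq_bigr do rewrite bin0 muln1; rewrite hockey_stick addn0.
rewrite big_ord_recr /= subnn bin0n muln0 addn0 addnS binS -(IH b) -addnS -IH.
rewrite -big_split /=; apply: eq_bigr => x _.
by rewrite -mulnDr subSn ?binS // -ltnS.
Qed.

Lemma Vandermonde_binZ (c a N : nat) (l : int) : c <= N ->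
  \sum_(x < N.+1) 'C(c, x) * binZ a (l - x%:Z)%R = binZ (a + c) l.
Proof.
move=> cN; case: l => [l|k]; last first.
  by rewrite big1 // => x _; rewrite binZ_neg ?muln0 // NegzE; lia.
rewrite /= addnC -binomial.Vandermonde.
under eq_bigr do rewrite binZ_subn.
pose t := (minn N l).+1.
have tl x : t <= x < N.+1 -> (x <= l) = false by rewrite /t; lia.
have tc x : t <= x < l.+1 -> 'C(c, x) = 0.
  by rewrite /t => txl; rewrite bin_small //; lia.
rewrite (sum_ord_trunc (t := t) (G := fun x => 'C(c, x) * (if x <= l then 'C(a, l - x) else 0))).
- rewrite (sum_ord_trunc (t := t) (G := fun x => 'C(c, x) * 'C(a, l - x))).
  + by apply: eq_bigr => x _; rewrite ifT // -ltnS (leq_trans (ltn_ord x)) // /t ltnS geq_minr.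
  + by rewrite /t ltnS geq_minr.
  + by move=> x /tc ->.
- by rewrite /t ltnS geq_minl.
- by move=> x /tl ->; rewrite muln0.
Qed.

Section SupportedFunctions.
Variables (D : finType) (N : nat).
Implicit Types (S : {set D}) (f g h : {ffun D -> 'I_N.+1}) (F : (D -> nat) -> nat).

Definition supported S f := [forall e, (e \notin S) ==> (f e == ord0)].

Lemma supportedP S f : reflect (forall e, e \notin S -> f e = 0 :> nat) (supported S f).
Proof.
apply: (iffP forallP) => f0 e; last by apply/implyP => /f0 fe0; apply/eqP/val_inj.
by move/implyP: (f0 e) => f0e /f0e /eqP ->.
Qed.

Lemma supported_setT f : supported [set: D] f.
Proof. by apply/supportedP => e; rewrite inE. Qed.

Lemma sum_supported_setU S1 S2 F : [disjoint S1 & S2] ->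
  \sum_(f | supported (S1 :|: S2) f) F (fun e => f e) =
  \sum_(g | supported S1 g) \sum_(h | supported S2 h) F (fun e => g e + h e).
Proof.
move=> S12; have S1_S2 e : e \in S1 -> e \notin S2.
  by move=> eS1; apply: contraTN S12 => eS2; apply/pred0Pn; exists e; apply/andP.
pose glue (gh : {ffun D -> 'I_N.+1} * {ffun D -> 'I_N.+1}) :=
  [ffun e => if e \in S1 then gh.1 e else gh.2 e].
pose cut f := ([ffun e => if e \in S1 then f e else ord0],
               [ffun e => if e \in S1 then ord0 else f e]).
rewrite pair_big_dep (reindex_onto glue cut) /=; last first.
  move=> f _; apply/ffunP => e; rewrite /glue /cut !ffunE /=; by case: (e \in S1).
have cut_supp f : supported (S1 :|: S2) f -> supported S1 (cut f).1 && supported S2 (cut f).2.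
  move/supportedP=> f0; apply/andP; split; apply/supportedP => e eS; rewrite !ffunE.
    by rewrite (negbTE eS).
  by case: ifP => // eS1; rewrite f0 // inE eS1.
apply: eq_big => [[g h] | [g h] /andP[_ /eqP [<- <-]]]; last first.
  congr F; apply: functional_extensionality => e; rewrite /glue !ffunE /=.
  by case: (e \in S1); rewrite ?addn0.
apply/andP/andP => [[/cut_supp cs /eqP gh] | [/supportedP g0 /supportedP h0]].
  by rewrite gh in cs; apply/andP.
split.
  by apply/supportedP => e; rewrite inE negb_or ffunE => /andP[/negbTE -> /h0].
apply/eqP; congr pair; apply/ffunP => e; rewrite /cut /glue !ffunE /=;
  case: (boolP (e \in S1)) => eS1 //; apply/val_inj.
  by rewrite /= g0.
by rewrite /= h0 ?S1_S2.
Qed.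

Lemma sum_supported_set0 F : \sum_(f | supported set0 f) F (fun e => f e) = F (fun=> 0).
Proof.
rewrite (big_pred1 [ffun=> ord0]) => [|f].
  by congr F; apply: functional_extensionality => e; rewrite ffunE.
apply/supportedP/eqP => [f0 | -> e _]; last by rewrite ffunE.
by apply/ffunP => e; apply/val_inj; rewrite /= ffunE f0 ?inE.
Qed.

Lemma sum_supported_set1 e0 F :
  \sum_(f | supported [set e0] f) F (fun e => f e) =
  \sum_(x < N.+1) F (fun e => if e == e0 then x : nat else 0).
Proof.
pose spike (x : 'I_N.+1) := [ffun e => if e == e0 then x else ord0].
rewrite (reindex_onto spike (fun f => f e0)) /= => [|f /supportedP f0].
  apply: eq_big => [x | x _].
    rewrite ffunE eqxx eqxx andbT; apply/supportedP => e; rewrite inE ffunE.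
    by move/negbTE->.
  by congr F; apply: functional_extensionality => e; rewrite ffunE; case: eqP.
apply/ffunP => e; rewrite ffunE; case: eqP => [-> // | /eqP ne0].
by apply/val_inj; rewrite /= f0 // inE.
Qed.

Lemma sum_supported_setD1 S e0 F : e0 \in S ->
  \sum_(f | supported S f) F (fun e => f e) =
  \sum_(x < N.+1) \sum_(h | supported (S :\ e0) h) F (fun e => if e == e0 then x : nat else h e).
Proof.
move=> e0S; rewrite (eq_bigl (supported ([set e0] :|: S :\ e0))) => [|f]; last by rewrite setD1K.
rewrite sum_supported_setU ?disjoints1 ?setD11 //.
rewrite (sum_supported_set1 _
  (fun phi => \sum_(h | supported (S :\ e0) h) F (fun e => phi e + h e))).
apply: eq_bigr => x _; apply: eq_bigr => h /supportedP h0.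
congr F; apply: functional_extensionality => e; case: eqP => [-> | _]; last by [].
by rewrite h0 ?setD11 ?addn0.
Qed.

End SupportedFunctions.

Lemma card_solutions_widen (D : finType) (B M : nat) (Q : pred (D -> nat)) : M <= B ->
  (forall phi, Q phi -> forall e, phi e <= M) ->
  #|[set f : {ffun D -> 'I_B.+1} | Q (fun e => f e)]| =
  #|[set f : {ffun D -> 'I_M.+1} | Q (fun e => f e)]|.
Proof.
move=> MB QM; have MB1 : M.+1 <= B.+1 by [].
pose w (g : {ffun D -> 'I_M.+1}) := [ffun e => widen_ord MB1 (g e)].
have w_val g : (fun e => w g e : nat) = (fun e => g e).
  by apply: functional_extensionality => e; rewrite ffunE.
have w_inj : injective w.
  by move=> g1 g2 /ffunP w12; apply/ffunP => e; apply/val_inj; move: (w12 e); rewrite !ffunE => -[].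
rewrite -(card_imset _ w_inj); apply: eq_card => f; rewrite inE.
apply/idP/imsetP => [Qf | [g]]; last by rewrite inE -w_val => Qg ->.
have f_le e : f e <= M by exact: QM Qf e.
pose g : {ffun D -> 'I_M.+1} := [ffun e => inord (f e)].
have wg : w g = f by apply/ffunP => e; apply/val_inj; rewrite /w /g !ffunE /= inordK ?ltnS.
by exists g; rewrite // inE -w_val wg.
Qed.

Lemma sum_compositions_prod_bin (D : finType) N (A : {set D}) (y : D -> nat) s :
  0 < #|A| -> s <= N ->
  \sum_(c : {ffun D -> 'I_N.+1} | supported A c && (\sum_(e in A) c e == s))
     \prod_(e in A) 'C(c e, y e) =
  'C(s + #|A|.-1, #|A|.-1 + \sum_(e in A) y e).
Proof.
move=> /prednK; move: #|A|.-1 => k; elim: k A s => [|k IH] A s cardA sN.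
  have /cards1P[e0 ->] : #|A| == 1 by rewrite -cardA.
  rewrite big_mkcondr (sum_supported_set1 _ _ (fun phi =>
    if \sum_(e in [set e0]) phi e == s then \prod_(e in [set e0]) 'C(phi e, y e) else 0)).
  rewrite big_set1 addn0 add0n.
  transitivity (\sum_(x < N.+1) if x == s :> nat then 'C(x, y e0) else 0).
    by apply: eq_bigr => x _; rewrite !big_set1 eqxx.
  rewrite -big_mkcond.
  by rewrite (big_pred1 (Ordinal (sN : s < N.+1))).
have [e0 e0A] : exists e0, e0 \in A by apply/card_gt0P; rewrite -cardA.
have cardA' : k.+1 = #|A :\ e0| by move: cardA; rewrite (cardsD1 e0) e0A => -[].
rewrite big_mkcondr (sum_supported_setD1 _ (fun phi =>
  if \sum_(e in A) phi e == s then \prod_(e in A) 'C(phi e, y e) else 0) e0A) /=.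
under eq_bigr => x _.
  under eq_bigr do rewrite (big_setD1_if _ _ _ (fun _ z => z) e0A)
                           (big_setD1_if _ _ _ (fun e z => 'C(z, y e)) e0A).
  over.
rewrite /= (big_setD1 _ e0A) /=; set Y := \sum_(e in A :\ e0) y e.
pose G x := 'C(x, y e0) * 'C(s + k - x, k + Y).
transitivity (\sum_(x < N.+1) if x <= s then G x else 0).
  apply: eq_bigr => x _; case: leqP => xs; last first.
    by rewrite big1 // => h _; rewrite ifF //; apply/negbTE/eqP; lia.
  rewrite /G -addnBAC // -IH ?(leq_trans (leq_subr x s) sN) //.
  rewrite big_distrr big_mkcondr /=; apply: eq_bigr => h _.
  have -> : (x + \sum_(e in A :\ e0) h e == s) = (\sum_(e in A :\ e0) h e == s - x).
    by apply/eqP/eqP; lia.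
  by case: ifP; rewrite ?muln0.
rewrite (sum_ord_trunc (t := s.+1) (G := fun x => if x <= s then G x else 0)) ?ltnS //; last first.
  by move=> x /andP[sx _]; rewrite leqNgt sx.
under eq_bigr => x _ do rewrite ifT ?leq_ord //.
rewrite -(sum_ord_trunc (t := s.+1) (K := (s + k).+1)) ?ltnS ?leq_addr //.
  by rewrite sum_bin_mul_bin_sub addSnnS; congr 'C(_, _); lia.
by move=> x /andP[sx xsk]; rewrite /G (@bin_small (s + k - x)) ?muln0 //; lia.
Qed.

Lemma Vandermonde_binZ_prod (D I : finType) N (tail : D -> I) (V : pred I) (S : {set D})
    (a : I -> nat) (l : I -> int) (c : D -> nat) :
  (forall e, e \in S -> V (tail e)) -> (forall e, c e <= N) ->
  \sum_(y : {ffun D -> 'I_N.+1} | supported S y)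
     \prod_(e in S) 'C(c e, y e) *
     \prod_(i | V i) binZ (a i) (l i - (\sum_(e in S | tail e == i) y e)%:Z)%R =
  \prod_(i | V i) binZ (a i + \sum_(e in S | tail e == i) c e) (l i).
Proof.
move=> SV cN; move cardS: #|S| => k; elim: k S l SV cardS => [|k IH] S l SV cardS.
  move/eqP: cardS; rewrite cards_eq0 => /eqP ->.
  rewrite (sum_supported_set0 _ (fun y => \prod_(e in set0) 'C(c e, y e) *
    \prod_(i | V i) binZ (a i) (l i - (\sum_(e in set0 | tail e == i) y e)%:Z)%R)).
  rewrite big_set0 mul1n; apply: eq_bigr => i _.
  by rewrite !big_pred0 ?subr0 ?addn0 // => e; rewrite inE.
have [e0 e0S] : exists e0, e0 \in S by apply/card_gt0P; rewrite cardS.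
have cardS' : #|S :\ e0| = k by move: cardS; rewrite (cardsD1 e0) e0S => -[].
have S'V e : e \in S :\ e0 -> V (tail e) by rewrite in_setD1 => /andP[_ /SV].
pose l' (x : nat) i := (l i - (if tail e0 == i then x else 0)%:Z)%R.
rewrite (sum_supported_setD1 _ (fun y => \prod_(e in S) 'C(c e, y e) *
    \prod_(i | V i) binZ (a i) (l i - (\sum_(e in S | tail e == i) y e)%:Z)%R) e0S) /=.
pose a' i := a i + \sum_(e in S :\ e0 | tail e == i) c e.
transitivity (\sum_(x < N.+1) 'C(c e0, x) * \prod_(i | V i) binZ (a' i) (l' x i)).
  apply: eq_bigr => x _; rewrite -IH // big_distrr /=; apply: eq_bigr => h _.
  rewrite (big_setD1_if _ _ _ (fun e z => 'C(c e, z)) e0S) -mulnA /=; congr (_ * (_ * _)).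
  apply: eq_bigr => i _; rewrite (sum_setD1_cond _ _ e0S) eqxx /l'; congr binZ.
  rewrite (eq_bigr (fun e => h e : nat)) => [|e /andP[]].
    by rewrite PoszD opprD addrA; case: (tail e0 == i).
  by rewrite in_setD1 => /andP[/negbTE ->].
have Vi0 : V (tail e0) by apply: SV.
rewrite (eq_bigr (fun x : 'I_N.+1 => 'C(c e0, x) * binZ (a' (tail e0)) (l' x (tail e0)) *
           \prod_(i | V i && (i != tail e0)) binZ (a' i) (l i))) => [|x _]; last first.
  rewrite (bigD1 _ Vi0) /= mulnA; congr (_ * _); apply: eq_bigr => i /andP[_ i0i].
  by rewrite /l' eq_sym (negbTE i0i) subr0.
rewrite -big_distrl /= [RHS](bigD1 _ Vi0) /=; congr (_ * _).
  rewrite (sum_setD1_cond _ _ e0S) eqxx addnCA addnC -/(a' _).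
  rewrite -(Vandermonde_binZ _ _ (cN e0)); apply: eq_bigr => x _.
  by rewrite /l' eqxx.
apply: eq_bigr => i /andP[_ /negbTE i0i].
by rewrite (sum_setD1_cond _ _ e0S) eq_sym i0i.
Qed.

Section Flows.
Variables (n m : nat) (E : 'I_m -> 'I_n.+1 * 'I_n.+1).
Hypothesis E_up : forall e, (E e).1 < (E e).2.
Implicit Types (S : {set 'I_m}) (phi psi : 'I_m -> nat).

Definition in_edges (k : 'I_n.+1) := [set e | (E e).2 == k].

Definition inner_in_edges (k : 'I_n.+1) := [set e | ((E e).2 == k) && (0 < (E e).1)].

Definition edges_below (p : nat) := [set e | (E e).2 < p].

Definition inner_edges_below (p : nat) := [set e | ((E e).2 < p) && (0 < (E e).1)].

Definition outflow (S : {set 'I_m}) phi (i : 'I_n.+1) :=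
  \sum_(e in S | (E e).1 == i) phi e.

Lemma edges_below_succ (P : 'I_n.+1) : edges_below P.+1 = in_edges P :|: edges_below P.
Proof. by apply/setP => e; rewrite !inE ltnS leq_eqVlt -(inj_eq val_inj). Qed.

Lemma inner_edges_below_succ (P : 'I_n.+1) :
  inner_edges_below P.+1 = inner_in_edges P :|: inner_edges_below P.
Proof. by apply/setP => e; rewrite !inE ltnS leq_eqVlt -(inj_eq val_inj) andb_orl. Qed.

Lemma disjoint_in_edges_below (P : 'I_n.+1) : [disjoint in_edges P & edges_below P].
Proof.
by rewrite -setI_eq0; apply/eqP/setP => e; rewrite !inE; case: eqP => // ->; rewrite ltnn.
Qed.

Lemma disjoint_inner_in_edges_below (P : 'I_n.+1) :
  [disjoint inner_in_edges P & inner_edges_below P].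
Proof.
by rewrite -setI_eq0; apply/eqP/setP => e; rewrite !inE; case: eqP => //= ->; rewrite ltnn andbF.
Qed.

Lemma netflowD phi psi k :
  netflow E (fun e => phi e + psi e) k = (netflow E phi k + netflow E psi k)%R.
Proof. by rewrite /netflow !big_split /= !PoszD addrACA opprD. Qed.

Lemma netflow_restrict S phi k : (forall e, e \notin S -> phi e = 0) ->
  netflow E phi k = ((outflow S phi k)%:Z - (\sum_(e in S | (E e).2 == k) phi e)%:Z)%R.
Proof.
move=> phi0; rewrite /netflow /outflow (sum_restrict (fun e => (E e).1 == k) phi0).
by rewrite (sum_restrict (fun e => (E e).2 == k) phi0).
Qed.

Lemma netflow_in_edges (P : 'I_n.+1) S phi k : S \subset in_edges P ->
  (forall e, e \notin S -> phi e = 0) ->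
  netflow E phi k = ((outflow S phi k)%:Z - (if k == P then \sum_(e in S) phi e else 0)%:Z)%R.
Proof.
move=> /subsetP SP phi0; rewrite (netflow_restrict _ phi0); congr (_ - Posz _)%R.
case: eqP => [-> | kP]; first by apply: eq_bigl => e; rewrite andb_idr // => /SP; rewrite inE.
by rewrite big_pred0 // => e; apply/negbTE/andP => -[/SP]; rewrite inE => /eqP-> /eqP/esym/kP.
Qed.

Lemma netflow_edges_below (P : 'I_n.+1) phi :
  (forall e, e \notin edges_below P -> phi e = 0) -> netflow E phi P = 0%R.
Proof.
move=> phi0; rewrite (netflow_restrict _ phi0) /outflow !big_pred0 // => e;
  rewrite inE; apply/negbTE/andP => -[eP /eqP eE]; move: eP (E_up e); rewrite eE; lia.
Qed.

Lemma outflow_in_edges_ge (P : 'I_n.+1) S phi (i : 'I_n.+1) :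
  S \subset in_edges P -> P <= i -> outflow S phi i = 0.
Proof.
move=> /subsetP SP Pi; rewrite /outflow big_pred0 // => e.
apply/negbTE/andP => -[/SP]; rewrite inE => /eqP eP /eqP ei.
by move: (E_up e); rewrite eP ei; lia.
Qed.

Lemma sum_outflow S phi : \sum_i outflow S phi i = \sum_(e in S) phi e.
Proof. by rewrite [RHS](partition_big (fun e => (E e).1) predT). Qed.

Lemma sum_in_edges_outflow (P : 'I_n.+1) phi :
  \sum_(e in in_edges P) phi e =
  outflow (in_edges P) phi ord0 + \sum_(i : 'I_n.+1 | 0 < i < P) outflow (in_edges P) phi i.
Proof.
rewrite -sum_outflow (bigD1 ord0) //= big_mkcond [in RHS]big_mkcond /=; congr (_ + _).
apply: eq_bigr => i _; rewrite lt0n -(inj_eq val_inj) /=.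
case: ltnP => [|/(outflow_in_edges_ge phi (subxx _))]; rewrite ?andbT ?andbF //.
by case: (i == 0 :> nat).
Qed.

Definition demand (b : 'I_n.+1 -> nat) (p : nat) (k : 'I_n.+1) : int :=
  if k == ord0 then Posz (\sum_(i : 'I_n.+1 | 0 < i < p) b i)
  else if k < p then (- (b k)%:Z)%R else 0%R.

(* Bounding flow values by N keeps the sums over flows finite. *)
Definition bounded_count N S (v : 'I_n.+1 -> int) : nat :=
  \sum_(f : {ffun 'I_m -> 'I_N.+1} | supported S f)
    [forall k, netflow E (fun e => f e) k == v k].

Lemma demand_succ (P : 'I_n.+1) b phi : 0 < P ->
  (forall e, e \notin in_edges P -> phi e = 0) -> \sum_(e in in_edges P) phi e = b P ->
  forall k, demand b P.+1 k =
            (demand (fun i => (b i + outflow (in_edges P) phi i)%N) P k + netflow E phi k)%R.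
Proof.
move=> P_gt0 phi0 sum_phi k; rewrite (netflow_in_edges _ (subxx _) phi0) /demand.
have [-> | k0] := eqVneq k ord0.
  rewrite eq_sym ord_gt0_neq0 // subr0 (big_ord_pos_ltS _ _ P_gt0) -sum_phi.
  by rewrite sum_in_edges_outflow big_split /= !PoszD; ring.
rewrite -[k == P]/(k == P :> nat) ltnS; case: (ltngtP k P) => [kP | Pk | kP].
- by rewrite PoszD; ring.
- by rewrite (outflow_in_edges_ge _ (subxx _) (ltnW Pk)) add0r subr0.
- move/val_inj: kP => ->.
  by rewrite (outflow_in_edges_ge _ (subxx _) (leqnn P)) sum_phi add0r sub0r.
Qed.

Lemma bounded_count_succ N (P : 'I_n.+1) b : 0 < P ->
  bounded_count N (edges_below P.+1) (demand b P.+1) =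
  \sum_(c : {ffun 'I_m -> 'I_N.+1} |
          supported (in_edges P) c && (\sum_(e in in_edges P) c e == b P))
    bounded_count N (edges_below P)
      (demand (fun i => (b i + outflow (in_edges P) (fun e => c e) i)%N) P).
Proof.
move=> P_gt0; rewrite /bounded_count edges_below_succ.
rewrite (sum_supported_setU _ (fun phi => [forall k, netflow E phi k == demand b P.+1 k])
  (disjoint_in_edges_below P)) big_mkcondr /=.
apply: eq_bigr => c /supportedP c0; case: eqP => [sum_c | sum_c].
  apply: eq_bigr => g _; congr nat_of_bool; apply: eq_forallb => k.
  by rewrite netflowD (demand_succ _ c0 sum_c) // addrC (inj_eq (addIr _)).
apply: big1 => g /supportedP g0; case: forallP => // /(_ P) /eqP.
rewrite netflowD (netflow_edges_below g0) addr0 (netflow_in_edges _ (subxx _) c0) eqxx.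
rewrite (outflow_in_edges_ge _ (subxx _) (leqnn P)) sub0r /demand.
by rewrite ord_gt0_neq0 // ltnSn => /oppr_inj [] /sum_c.
Qed.

Definition indeg_pred (k : 'I_n.+1) := (indeg E k).-1.

Definition binomial_sum N (p : nat) (b : 'I_n.+1 -> nat) : nat :=
  \sum_(g : {ffun 'I_m -> 'I_N.+1} | supported (inner_edges_below p) g)
    \prod_(i : 'I_n.+1 | 0 < i < p)
      binZ (b i + indeg_pred i) ((indeg_pred i)%:Z - netflow E (fun e => g e) i)%R.

Lemma inner_in_edges_sub (P : 'I_n.+1) : inner_in_edges P \subset in_edges P.
Proof. by apply/subsetP => e; rewrite !inE => /andP[]. Qed.

Lemma bin_indeg_compositions N (P : 'I_n.+1) b phi : 0 < indeg E P -> b P <= N ->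
  (forall e, e \notin inner_in_edges P -> phi e = 0) ->
  'C(b P + indeg_pred P, indeg_pred P + \sum_(e in inner_in_edges P) phi e) =
  \sum_(c : {ffun 'I_m -> 'I_N.+1} |
          supported (in_edges P) c && (\sum_(e in in_edges P) c e == b P))
    \prod_(e in inner_in_edges P) 'C(c e, phi e).
Proof.
move=> indeg_P bPN phi0.
have sub := subsetP (inner_in_edges_sub P).
rewrite (sum_vanishing_off phi0) -(sum_vanishing_off (S := in_edges P)) => [|e eA]; last first.
  by rewrite phi0 //; apply: contra eA => /sub.
rewrite /indeg_pred -(sum_compositions_prod_bin phi indeg_P bPN).
apply: eq_bigr => c _; rewrite [LHS](bigID (mem (inner_in_edges P))) /=.
rewrite [X in _ * X]big1 ?muln1 => [|e /andP[_ /phi0 ->]]; last exact: bin0.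
by apply: eq_bigl => e; rewrite andb_idl // => /sub.
Qed.

Lemma binomial_sum_succ N (P : 'I_n.+1) b : 0 < P -> 0 < indeg E P -> b P <= N ->
  binomial_sum N P.+1 b =
  \sum_(c : {ffun 'I_m -> 'I_N.+1} |
          supported (in_edges P) c && (\sum_(e in in_edges P) c e == b P))
    binomial_sum N P (fun i => (b i + outflow (in_edges P) (fun e => c e) i)%N).
Proof.
move=> P_gt0 indeg_P bPN.
set A := in_edges P; set A' := inner_in_edges P.
pose a i := b i + indeg_pred i.
pose L phi i := ((indeg_pred i)%:Z - netflow E phi i)%R.
rewrite /binomial_sum inner_edges_below_succ (sum_supported_setU _
  (fun phi => \prod_(i : 'I_n.+1 | 0 < i < P.+1) binZ (a i) (L phi i))
  (disjoint_inner_in_edges_below P)).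
transitivity (\sum_(y : {ffun 'I_m -> 'I_N.+1} | supported A' y)
   \sum_(g : {ffun 'I_m -> 'I_N.+1} | supported (inner_edges_below P) g)
   \sum_(c : {ffun 'I_m -> 'I_N.+1} | supported A c && (\sum_(e in A) c e == b P))
     \prod_(e in A') 'C(c e, y e) *
     \prod_(i : 'I_n.+1 | 0 < i < P)
       binZ (a i) (L (fun e => g e) i - (outflow A' (fun e => y e) i)%:Z)%R).
  apply: eq_bigr => y /supportedP y0; apply: eq_bigr => g /supportedP g0.
  rewrite big_ord_pos_ltS // -big_distrl /=; congr (_ * _).
    have g0' e : e \notin edges_below P -> g e = 0 :> nat.
      by move=> eP; apply: g0; apply: contra eP; rewrite !inE => /andP[].
    rewrite /L netflowD (netflow_edges_below g0') (netflow_in_edges _ (inner_in_edges_sub P) y0).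
    rewrite eqxx (outflow_in_edges_ge _ (inner_in_edges_sub P) (leqnn P)) addr0 sub0r opprK.
    by rewrite -PoszD /= (bin_indeg_compositions (N := N) indeg_P bPN y0).
  apply: eq_bigr => i /andP[i_gt0 iP].
  rewrite /L netflowD (netflow_in_edges _ (inner_in_edges_sub P) y0) ifF ?subr0.
    by rewrite opprD addrA addrAC.
  by apply/negbTE; rewrite -(inj_eq val_inj) neq_ltn iP.
have A'_tail e : e \in A' -> 0 < (E e).1 < P.
  by rewrite inE => /andP[/eqP eP pos]; rewrite pos -eP E_up.
under eq_bigr do rewrite exchange_big.
rewrite exchange_big; apply: eq_bigr => c _; rewrite exchange_big; apply: eq_bigr => g _.
rewrite (Vandermonde_binZ_prod _ _ A'_tail (fun e => leq_ord (c e))).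
apply: eq_bigr => i /andP[i_gt0 _]; rewrite addnAC; congr (binZ (_ + _ + _) _).
apply: eq_bigl => e; rewrite !inE -andbA.
by case: ((E e).1 =P i) => [-> | _]; rewrite ?i_gt0 ?andbF.
Qed.

Lemma netflow0 k : netflow E (fun=> 0) k = 0%R.
Proof. by rewrite /netflow !big1. Qed.

Lemma bounded_count_demand1 N b : bounded_count N (edges_below 1) (demand b 1) = binomial_sum N 1 b.
Proof.
have below1 : edges_below 1 = set0.
  by apply/setP => e; rewrite !inE; move: (E_up e); lia.
have inner_below1 : inner_edges_below 1 = set0.
  by apply/setP => e; rewrite !inE; move: (E_up e); lia.
rewrite /bounded_count /binomial_sum below1 inner_below1.
rewrite (sum_supported_set0 _ (fun phi => [forall k, netflow E phi k == demand b 1 k])).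
rewrite (sum_supported_set0 _ (fun phi => \prod_(i : 'I_n.+1 | 0 < i < 1)
  binZ (b i + indeg_pred i) ((indeg_pred i)%:Z - netflow E phi i)%R)).
rewrite big_pred0 => [|i]; last lia.
apply/eqP; rewrite eqb1; apply/forallP => k; rewrite netflow0 /demand big_pred0 => [|i]; last lia.
case: ifP => // k0; rewrite ifF //; move: k0; rewrite -(inj_eq val_inj) /=; lia.
Qed.

Lemma bounded_count_demand N p b : (forall k : 'I_n.+1, 0 < k -> 0 < indeg E k) ->
  0 < p <= n.+1 -> \sum_(i : 'I_n.+1 | 0 < i < p) b i <= N ->
  bounded_count N (edges_below p) (demand b p) = binomial_sum N p b.
Proof.
move=> indeg_gt0; elim: p b => [|p IH] b // /andP[_ pn] bN.
have [-> | p_gt0] := posnP p; first exact: bounded_count_demand1.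
pose P : 'I_n.+1 := Ordinal pn; rewrite -[p]/(nat_of_ord P) in p_gt0 bN *.
rewrite (big_ord_pos_ltS _ _ p_gt0) in bN.
rewrite bounded_count_succ // binomial_sum_succ ?indeg_gt0 ?(leq_trans (leq_addr _ _) bN) //.
apply: eq_bigr => c /andP[_ /eqP sum_c]; apply: IH; first by rewrite p_gt0 ltnW.
rewrite big_split /=; apply: leq_trans bN; rewrite addnC leq_add2r -sum_c.
by rewrite sum_in_edges_outflow leq_addl.
Qed.

Lemma netflow_cut phi (l : nat) :
  (\sum_(k : 'I_n.+1 | (k <= l)%N) netflow E phi k)%R =
  Posz (\sum_(e | (E e).1 <= l < (E e).2) phi e).
Proof.
have sum_end (h : 'I_m -> 'I_n.+1) :
    \sum_(k : 'I_n.+1 | k <= l) \sum_(e | h e == k) phi e = \sum_(e | h e <= l) phi e.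
  rewrite [RHS](partition_big h (fun k : 'I_n.+1 => k <= l)) //=.
  by apply: eq_bigr => k kl; apply: eq_bigl => e; case: eqP => [-> | _]; rewrite ?andbT ?andbF.
rewrite /netflow sumrB -!Posz_sum (sum_end (fun e => (E e).1)) (sum_end (fun e => (E e).2)).
rewrite (bigID (fun e => (E e).2 <= l)) /= PoszD addrAC.
rewrite (eq_bigl (fun e => (E e).2 <= l)) => [|e]; last by move: (E_up e); lia.
by rewrite subrr add0r; congr Posz; apply: eq_bigl => e; lia.
Qed.

Lemma flow_le_cut phi (v : 'I_n.+1 -> int) : (forall k, netflow E phi k = v k) ->
  forall e, ((phi e)%:Z <= \sum_(k : 'I_n.+1 | (k <= (E e).1)%N) v k)%R.
Proof.
move=> phi_v e; rewrite -(eq_bigr _ (fun k _ => phi_v k)) netflow_cut lez_nat.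
by rewrite (bigD1 e) ?leq_addr //= leqnn E_up.
Qed.

Lemma flow_le_sum (v : 'I_n.+1 -> int) (w : 'I_n.+1 -> nat) phi :
  (forall k, v k <= Posz (w k))%R -> (forall k, netflow E phi k = v k) ->
  forall e, phi e <= \sum_k w k.
Proof.
move=> v_le phi_v e; rewrite -lez_nat (le_trans (flow_le_cut phi_v e)) //.
rewrite (le_trans (ler_sum _ (fun k _ => v_le k))) // -Posz_sum lez_nat.
by rewrite [leqRHS](bigID (fun k : 'I_n.+1 => (k <= (E e).1)%N)) leq_addr.
Qed.

Lemma KPF_bounded_count N v :
  (forall phi, (forall k, netflow E phi k = v k) -> forall e, phi e <= N) ->
  KPF E v = bounded_count N [set: 'I_m] v.
Proof.
move=> solN; rewrite /KPF /=; set B := (\sum_(k < n.+1) `|v k|)%N.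
pose Q phi := [forall k, netflow E phi k == v k].
have solB phi : Q phi -> forall e, phi e <= B.
  move=> /forallP Qphi e; rewrite -lez_nat (le_trans (flow_le_cut (fun k => eqP (Qphi k)) e)) //.
  apply: (@le_trans _ _ (\sum_(k : 'I_n.+1 | (k <= (E e).1)%N) Posz `|v k|)%R).
    by apply: ler_sum => k _; rewrite abszE ler_norm.
  by rewrite /B Posz_sum [leRHS](bigID (fun k : 'I_n.+1 => (k <= (E e).1)%N)) lerDl sumr_ge0.
have solBN phi : Q phi -> forall e, phi e <= minn B N.
  by move=> Qphi e; rewrite leq_min solB // solN // => k; apply/eqP/(forallP Qphi).
rewrite (@card_solutions_widen _ B (minn B N) Q (geq_minl _ _) solBN).
rewrite -(@card_solutions_widen _ N (minn B N) Q (geq_minr _ _) solBN).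
rewrite /bounded_count -sum1_card big_mkcond [RHS]big_mkcond; apply: eq_bigr => f _.
by rewrite inE supported_setT -/(Q _); case: (Q _).
Qed.

Lemma bounded_count_restrict N S v :
  (forall phi, (forall k, netflow E phi k = v k) -> forall e, e \notin S -> phi e = 0) ->
  bounded_count N [set: 'I_m] v = bounded_count N S v.
Proof.
move=> solS; rewrite /bounded_count big_mkcond [RHS]big_mkcond; apply: eq_bigr => f _ /=.
rewrite supported_setT; case: (boolP (supported S f)) => // nS.
case: forallP => // sol; case/negP: nS; apply/supportedP => e.
by apply: (solS (fun e => f e)) => k; apply/eqP.
Qed.

Lemma sum_indeg : \sum_(k : 'I_n.+1) indeg E k = m.
Proof.
rewrite -[RHS]card_ord -sum1_card (partition_big (fun e => (E e).2) predT) //=.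
by apply: eq_bigr => k _; rewrite /indeg -sum1_card; apply: eq_bigl => e; rewrite inE.
Qed.

Lemma indeg_ord0 : indeg E ord0 = 0.
Proof.
apply/eqP; rewrite cards_eq0; apply/eqP/setP => e; rewrite !inE -val_eqE /=.
by move: (E_up e); lia.
Qed.

Lemma sum_inm : (forall i, 0 < indeg E (lift ord0 i)) -> \sum_(i < n) inm E i = m - n.
Proof.
move=> indeg_gt0; suff : \sum_(i < n) inm E i + n = m by lia.
rewrite -[X in _ + X]card_ord -sum1_card -big_split /= -[RHS]sum_indeg big_ord_recl indeg_ord0.
by apply: eq_bigr => i _; rewrite addn1 prednK.
Qed.

Lemma source_free_of_netflow phi :
  netflow E phi ord0 = 0%R -> forall e, (E e).1 = ord0 -> phi e = 0.
Proof.
rewrite /netflow [X in (_ - Posz X)%R]big_pred0 => [|e]; last first.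
  by apply/negbTE/eqP => e0; move: (E_up e); rewrite e0.
rewrite subr0 => -[] /eqP; rewrite sum_nat_eq0 => /forallP phi0 e e0.
by apply/eqP; move: (phi0 e); rewrite e0 eqxx.
Qed.

Lemma source_free_inner_edges N p (g : {ffun 'I_m -> 'I_N.+1}) :
  supported (inner_edges_below p) g -> forall e, (E e).1 = ord0 -> g e = 0 :> nat.
Proof. by move=> /supportedP g0 e e0; rewrite g0 // inE e0 andbF. Qed.

Section SourceFreeFlow.
Variable phi : 'I_m -> nat.
Hypothesis phi0 : forall e, (E e).1 = ord0 -> phi e = 0.

Lemma netflow_source_free : netflow E phi ord0 = 0%R.
Proof.
rewrite /netflow [in X in (_ - X)%R]big1 => [|e /eqP e0]; last by move: (E_up e); rewrite e0.
by rewrite big1 // => e /eqP /phi0.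
Qed.

Lemma sum_netflow_lift_prefix (l : nat) :
  (\sum_(k : 'I_n.+1 | (k <= l)%N) netflow E phi k =
   \sum_(i < n | (i < l)%N) netflow E phi (lift ord0 i))%R.
Proof.
by rewrite big_mkcond big_ord_recl /= netflow_source_free add0r [RHS]big_mkcond.
Qed.

Lemma sum_netflow_lift_prefix_ge0 (l : nat) :
  (0 <= \sum_(i < n | (i < l)%N) netflow E phi (lift ord0 i))%R.
Proof. by rewrite -sum_netflow_lift_prefix netflow_cut. Qed.

Lemma sum_netflow_lift : (\sum_(i < n) netflow E phi (lift ord0 i))%R = 0%R.
Proof.
rewrite (eq_bigl (fun i : 'I_n => i < n)) => [|i]; last by rewrite ltn_ord.
rewrite -sum_netflow_lift_prefix netflow_cut big_pred0 // => e.
by move: (ltn_ord (E e).2); lia.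
Qed.

Lemma netflow_eq_rhsvec (j : 'I_n -> nat) :
  [forall k, netflow E phi k == rhsvec E j k] =
  [forall i, Posz (j i) == ((inm E i)%:Z - netflow E phi (lift ord0 i))%R].
Proof.
apply/forallP/forallP => sol => [i | k].
  by move: (sol (lift ord0 i)); rewrite /rhsvec liftK => /eqP ->; rewrite opprB addrC subrK.
case: (unliftP ord0 k) => [i -> | ->]; rewrite /rhsvec ?liftK ?unlift_none.
  by move/eqP: (sol i) ->; rewrite opprB addrC subrK.
by rewrite netflow_source_free.
Qed.

Lemma sum_dominated_compositions (b : 'I_n -> nat) :
  (forall i, 0 < indeg E (lift ord0 i)) ->
  \sum_(j : {ffun 'I_n -> 'I_(m - n).+1} |
          ((\sum_(i < n) nat_of_ord (j i) == m - n)%N &&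
           dom_le (fun i => nat_of_ord (j i)) (inm E)))
     (\prod_(i < n) 'C(b i + inm E i, j i)) *
     [forall k, netflow E phi k == rhsvec E (fun i => nat_of_ord (j i)) k] =
  \prod_(i < n) binZ (b i + inm E i) ((inm E i)%:Z - netflow E phi (lift ord0 i))%R.
Proof.
move=> indeg_gt0; pose L i := ((inm E i)%:Z - netflow E phi (lift ord0 i))%R.
under eq_bigr do rewrite netflow_eq_rhsvec -/(L _).
have [/forallP L_ge0 | /forallPn[i0]] := boolP [forall i, 0 <= L i]%R; last first.
  rewrite -ltNge => L_lt0; rewrite [RHS](bigD1 i0) //= binZ_neg // mul0n.
  apply: big1 => j _; case: forallP => [/(_ i0) /eqP L_j | _]; last by rewrite muln0.
  by move: L_lt0; rewrite /L -L_j.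
pose l i := `|L i|%N; have L_l i : Posz (l i) = L i by rewrite gez0_abs.
have sum_l : \sum_(i < n) l i = m - n.
  apply/eqP; rewrite -eqz_nat Posz_sum (eq_bigr _ (fun i _ => L_l i)) sumrB.
  by rewrite sum_netflow_lift subr0 -Posz_sum sum_inm.
pose j0 : {ffun 'I_n -> 'I_(m - n).+1} := [ffun i => inord (l i)].
have j0E i : nat_of_ord (j0 i) = l i.
  by rewrite ffunE inordK // ltnS -sum_l (bigD1 i) //= leq_addr.
rewrite (eq_bigr (fun j : {ffun 'I_n -> 'I_(m - n).+1} =>
  if [forall i, Posz (j i) == L i] then \prod_(i < n) 'C(b i + inm E i, j i) else 0)) => [|j _];
  last by case: [forall i, _]; rewrite ?muln1 ?muln0.
rewrite -big_mkcondr (big_pred1 j0) => [|j].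
  by apply: eq_bigr => i _; rewrite j0E -/(L i) -L_l.
apply/andP/eqP => [[_ /forallP sol] | ->].
  apply/ffunP => i; apply/val_inj; rewrite /= j0E.
  by move: (sol i); rewrite -L_l => /eqP[].
split; last by apply/forallP => i; rewrite j0E L_l.
rewrite (eq_bigr _ (fun i _ => j0E i)) sum_l eqxx /=; apply/forallP => k.
rewrite -lez_nat !Posz_sum (eq_bigr _ (fun i _ => congr1 Posz (j0E i))).
rewrite (eq_bigr _ (fun i _ => L_l i)).
by rewrite sumrB lerBlDr lerDl sum_netflow_lift_prefix_ge0.
Qed.

End SourceFreeFlow.

Lemma KPF_bvec (b : 'I_n -> nat) :
  KPF E (bvec b) = bounded_count (\sum_(i < n) b i + m) (edges_below n.+1)
    (demand (fun k => if unlift ord0 k is Some i then b i else 0) n.+1).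
Proof.
set w := fun k : 'I_n.+1 => if k == ord0 then \sum_(i < n) b i else 0.
have sum_w : \sum_k w k = \sum_(i < n) b i by rewrite -big_mkcond big_pred1_eq.
rewrite (KPF_bounded_count (N := \sum_(i < n) b i + m)) => [|phi sol e]; last first.
  rewrite (leq_trans (flow_le_sum (w := w) _ sol e)) ?sum_w ?leq_addr // => k.
  rewrite /bvec /w; case: (unliftP ord0 k) => [i -> | ->]; last by rewrite eqxx.
  by rewrite eq_sym (negbTE (neq_lift _ _)) oppr_le0.
congr bounded_count; first by apply/setP => e; rewrite !inE ltn_ord.
apply: functional_extensionality => k; rewrite /bvec /demand.
case: (unliftP ord0 k) => [i -> | ->]; last first.
  by rewrite eqxx big_ord_pos_lift; congr Posz; apply: eq_bigr => i _; rewrite liftK.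
by rewrite eq_sym (negbTE (neq_lift _ _)) ltn_ord.
Qed.

Lemma KPF_rhsvec N (j : 'I_n -> nat) : m <= N ->
  KPF E (rhsvec E j) = bounded_count N (inner_edges_below n.+1) (rhsvec E j).
Proof.
move=> mN; rewrite (KPF_bounded_count (N := N)) => [|phi sol e]; last first.
  rewrite (leq_trans (flow_le_sum (w := indeg E) _ sol e)) ?sum_indeg // => k.
  rewrite /rhsvec; case: (unliftP ord0 k) => [i -> | ->] //.
  by rewrite lerBlDr -PoszD lez_nat (leq_trans (leq_pred _) (leq_addr _ _)).
apply: bounded_count_restrict => phi sol e; rewrite inE ltn_ord /= -eqn0Ngt => /eqP e0.
apply: source_free_of_netflow; last exact: val_inj.
by rewrite sol /rhsvec unlift_none.
Qed.

End Flows.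

Theorem corollary5p7 (n m : nat) (E : 'I_m -> 'I_n.+1 * 'I_n.+1)
  (b : 'I_n -> nat) :
  (forall e, (E e).1 < (E e).2) ->
  ug_connected E ->
  (forall i : 'I_n, 0 < indeg E (lift ord0 i)) ->
  KPF E (bvec b) =
  \sum_(j : {ffun 'I_n -> 'I_(m - n).+1} |
          ((\sum_(i < n) nat_of_ord (j i) == m - n)%N &&
           dom_le (fun i => nat_of_ord (j i)) (inm E)))
     (\prod_(i < n) 'C(b i + inm E i, j i)) *
     KPF E (rhsvec E (fun i => nat_of_ord (j i))).
Proof.
move=> E_up _ indeg_gt0.
have indeg_pos (k : 'I_n.+1) : 0 < k -> 0 < indeg E k.
  by case: (unliftP ord0 k) => [i -> | ->].
rewrite KPF_bvec // bounded_count_demand ?leqnn //; last first.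
  by rewrite big_ord_pos_lift; under eq_bigr do rewrite liftK; rewrite leq_addr.
transitivity (\sum_(g : {ffun 'I_m -> 'I_(\sum_(i < n) b i + m).+1} |
                supported (inner_edges_below E n.+1) g)
  \prod_(i < n) binZ (b i + inm E i) ((inm E i)%:Z - netflow E (fun e => g e) (lift ord0 i))%R).
  by apply: eq_bigr => g _; rewrite big_ord_pos_lift; apply: eq_bigr => i _; rewrite liftK.
under eq_bigr => g /source_free_inner_edges g0 do
  rewrite -(sum_dominated_compositions E_up g0 b indeg_gt0).
rewrite exchange_big; apply: eq_bigr => j _.
by rewrite -big_distrr (KPF_rhsvec E_up _ (leq_addl (\sum_(i < n) b i) m)).
Qed.
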